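(* Let $L(x|t_j)$ and $L'(x|t_j)$ be the operators defined in the context. Then on $V(x_i)\otimes V(x_{i'})\otimes V(t_j)$ $$R_{12}(x_i\ominus x_{i'})L_{13}(x_i|t_j)L_{23}(x_{i'}|t_j)=L_{23}(x_{i'}|t_j)L_{13}(x_i|t_j)R_{12}(x_i\ominus x_{i'}),$$ and the same identity holds with $L$ replaced by $L'$ and $R$ replaced by $R'$; and on $V(x_i)\otimes V(t_j)\otimes V(t_{j'})$ $$r_{23}(t_j\ominus t_{j'})L_{12}(x_i|t_j)L_{13}(x_i|t_{j'})=L_{13}(x_i|t_{j'})L_{12}(x_i|t_j)r_{23}(t_j\ominus t_{j'}),$$ and the same identity holds with $L$ replaced by $L'$ and the same $r$. Here $R,R',r$ are $4\times 4$ matrices, in the basis $v_0\otimes v_0,v_0\otimes v_1,v_1\otimes v_0,v_1\otimes v_1$, of the form $$\begin{pmatrix}a&0&0&0\\0&b&c&0\\0&c'&b'&0\\0&0&0&a'\end{pmatrix}$$ with entries: for $R$: $a=1,b=0,c=1,c'=1+\beta\, x_{i'}\ominus x_i,\ b'=x_{i'}\ominus x_i,\ a'=1$; for $R'$: $a=1,b=x_i\ominus x_{i'},c=1,c'=1+\beta\,x_i\ominus x_{i'},b'=0,a'=1$; for $r$: $a=1,b=0,c=1+\beta\,t_j\ominus t_{j'},c'=1,b'=t_j\ominus t_{j'},a'=1$.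
   Context: $\beta$ is an indeterminate, $x\oplus y=x+y+\beta xy$, $x\ominus y=(x-y)/(1+\beta y)$. $V=\mathbb{Z}v_0\oplus\mathbb{Z}v_1$, and $V(z)$ denotes $V$ with scalars extended to rational functions in $\beta$ and $z$. Let $\sigma^-v_1=v_0,\ \sigma^-v_0=0,\ \sigma^+v_0=v_1,\ \sigma^+v_1=0$. With $e_{ab}$ ($a,b\in\{0,1\}$) the matrix units on the first factor ($e_{ab}v_b=v_a$), the operators on $V(x)\otimes V(t_j)$ are $L=\sum_{a,b}e_{ab}\otimes L_{ab}$ with $L_{00}=\sigma^+\sigma^-+(x\ominus t_j)\sigma^-\sigma^+$, $L_{01}=(1+\beta\,x\ominus t_j)\sigma^+$, $L_{10}=\sigma^-$, $L_{11}=\sigma^-\sigma^+$; and $L'=\sum e_{ab}\otimes L'_{ab}$ with $L'_{00}=\sigma^-\sigma^++(x\oplus t_j)\sigma^+\sigma^-$, $L'_{01}=\sigma^+$, $L'_{10}=(1+\beta\,x\oplus t_j)\sigma^-$, $L'_{11}=\sigma^+\sigma^-$. Subscripts such as $L_{13}$ indicate on which tensor factors of a triple tensor product the operator acts. *)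

(* Operators on tensor products of copies of V = F v0 (+) F v1
   are represented by matrices acting on column vectors, with the Kronecker
   product [tensmx] of mathcomp-real-closed (index (i,j) |-> i*2+j, so that the
   basis of V (x) V is ordered v0v0, v0v1, v1v0, v1v1). *)
From HB Require Import structures.
From mathcomp Require Import all_boot all_order all_algebra.
From mathcomp Require Import mxtens.
Set Implicit Arguments. Unset Strict Implicit. Unset Printing Implicit Defensive.
Import GRing.Theory.
Local Open Scope ring_scope.

Section Defs.
Variable F : fieldType.

Definition oplus (b x y : F) : F := x + y + b * x * y.
Definition ominus (b x y : F) : F := (x - y) / (1 + b * y).

Definition v0 : 'I_2 := @ord0 1.
Definition v1 : 'I_2 := @ord_max 1.

Definition e (a b : 'I_2) : 'M[F]_2 := delta_mx a b.
Definition sigp : 'M[F]_2 := delta_mx v1 v0.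
Definition sigm : 'M[F]_2 := delta_mx v0 v1.
Definition id2 : 'M[F]_2 := 1%:M.

Definition Lop (b x t : F) : 'M[F]_(2 * 2) :=
  e v0 v0 *t (sigp *m sigm + ominus b x t *: (sigm *m sigp))
  + e v0 v1 *t ((1 + b * ominus b x t) *: sigp)
  + e v1 v0 *t sigm
  + e v1 v1 *t (sigm *m sigp).

Definition Lop' (b x t : F) : 'M[F]_(2 * 2) :=
  e v0 v0 *t (sigm *m sigp + oplus b x t *: (sigp *m sigm))
  + e v0 v1 *t sigp
  + e v1 v0 *t ((1 + b * oplus b x t) *: sigm)
  + e v1 v1 *t (sigp *m sigm).

Definition ix (i j : 'I_2) : 'I_(2 * 2) := mxtens_index (i, j).

Definition blk (a b c c' b' a' : F) : 'M[F]_(2 * 2) :=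
  a *: delta_mx (ix v0 v0) (ix v0 v0)
  + b *: delta_mx (ix v0 v1) (ix v0 v1)
  + c *: delta_mx (ix v0 v1) (ix v1 v0)
  + c' *: delta_mx (ix v1 v0) (ix v0 v1)
  + b' *: delta_mx (ix v1 v0) (ix v1 v0)
  + a' *: delta_mx (ix v1 v1) (ix v1 v1).

Definition Rmx (b xi xi' : F) : 'M[F]_(2 * 2) :=
  blk 1 0 1 (1 + b * ominus b xi' xi) (ominus b xi' xi) 1.
Definition Rmx' (b xi xi' : F) : 'M[F]_(2 * 2) :=
  blk 1 (ominus b xi xi') 1 (1 + b * ominus b xi xi') 0 1.
Definition rmx (b tj tj' : F) : 'M[F]_(2 * 2) :=
  blk 1 0 (1 + b * ominus b tj tj') 1 (ominus b tj tj') 1.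

Definition swap : 'M[F]_(2 * 2) := blk 1 0 1 1 0 1.

Definition op12 (X : 'M[F]_(2 * 2)) : 'M[F]_8 := X *t id2.
Definition op23 (X : 'M[F]_(2 * 2)) : 'M[F]_8 := id2 *t X.
Definition P23 : 'M[F]_8 := id2 *t swap.
Definition op13 (X : 'M[F]_(2 * 2)) : 'M[F]_8 := P23 *m op12 X *m P23.

End Defs.

(* Like R, R' and r, the operators L(x|t) and L'(x|t) are charge-conserving
   six-vertex blocks: L(x|t) = blk (x (-) t) 1 (1 + b (x (-) t)) 1 1 0 and
   L'(x|t) = blk 1 (x (+) t) 1 (1 + b (x (+) t)) 0 1.  Embedded into
   V (x) V (x) V such a block is described entrywise by the binary digits of the
   basis indices, so each relation becomes 64 identities between rational
   functions of the weights.  They hold because the spectral parameters combine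
   through the formal group law:
   (x (-) t) (-) (x' (-) t) = (x (+) t) (-) (x' (+) t) = x (-) x' and
   (x (-) t') (-) (x (-) t) = t (-) t'. *)
From HB Require Import structures.
From mathcomp Require Import all_boot all_order all_algebra.
From mathcomp Require Import mxtens ring.
Import GRing.Theory.
Local Open Scope ring_scope.

Ltac case_ord4 := case=> [[|[|[|[|?]]]] ?]; last by [].
Ltac case_ord8 := case=> [[|[|[|[|[|[|[|[|?]]]]]]]] ?]; last by [].

Lemma big_ord8 (R : nmodType) (f : 'I_8 -> R) : \sum_(k < 8) f k =
  f (@Ordinal 8 0 isT) + f (@Ordinal 8 1 isT) + f (@Ordinal 8 2 isT)
  + f (@Ordinal 8 3 isT) + f (@Ordinal 8 4 isT) + f (@Ordinal 8 5 isT)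
  + f (@Ordinal 8 6 isT) + f (@Ordinal 8 7 isT).
Proof.
rewrite !big_ord_recr big_ord0 /= add0r.
by do ! congr (_ + _); congr f; apply: val_inj.
Qed.

Lemma mulmx3E (R : pzSemiRingType) m n p q
    (A : 'M[R]_(m, n)) (B : 'M[R]_(n, p)) (C : 'M[R]_(p, q)) i j :
  (A *m B *m C) i j = \sum_(k < p) \sum_(l < n) A i l * B l k * C k j.
Proof. by rewrite !mxE; apply: eq_bigr => k _; rewrite !mxE mulr_suml. Qed.

Section SixVertexBlocks.
Variable F : fieldType.

Definition blk_weight (a b c c' b' a' : F) (p q p' q' : bool) : F :=
  match p, q, p', q' with
  | false, false, false, false => a
  | false, true, false, true => b
  | false, true, true, false => c
  | true, false, false, true => c'
  | true, false, true, false => b'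
  | true, true, true, true => a'
  | _, _, _, _ => 0
  end.

(* Writing false/true for v0/v1, the basis vector v_p (x) v_q (x) v_r of
   V (x) V (x) V has index 4p + 2q + r. *)
Definition site1 (i : nat) : bool := odd i./2./2.
Definition site2 (i : nat) : bool := odd i./2.
Definition site3 (i : nat) : bool := odd i.

Definition blk12 a b c c' b' a' : 'M[F]_8 := \matrix_(i, j)
  (blk_weight a b c c' b' a' (site1 i) (site2 i) (site1 j) (site2 j)
   * (site3 i == site3 j)%:R).
Definition blk23 a b c c' b' a' : 'M[F]_8 := \matrix_(i, j)
  (blk_weight a b c c' b' a' (site2 i) (site3 i) (site2 j) (site3 j)
   * (site1 i == site1 j)%:R).
Definition blk13 a b c c' b' a' : 'M[F]_8 := \matrix_(i, j)
  (blk_weight a b c c' b' a' (site1 i) (site3 i) (site1 j) (site3 j)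
   * (site2 i == site2 j)%:R).

Lemma Lop_blk (b x t : F) :
  Lop b x t = blk (ominus b x t) 1 (1 + b * ominus b x t) 1 1 0.
Proof.
apply/matrixP => i j; rewrite /Lop /blk /e /sigp /sigm !mxE.
by move: i j; case_ord4; case_ord4;
  rewrite ?big_ord_recr ?big_ord0 /= ?mxE /=; ring.
Qed.

Lemma Lop'_blk (b x t : F) :
  Lop' b x t = blk 1 (oplus b x t) 1 (1 + b * oplus b x t) 0 1.
Proof.
apply/matrixP => i j; rewrite /Lop' /blk /e /sigp /sigm !mxE.
by move: i j; case_ord4; case_ord4;
  rewrite ?big_ord_recr ?big_ord0 /= ?mxE /=; ring.
Qed.

Lemma op12_blk a b c c' b' a' : op12 (blk a b c c' b' a') = blk12 a b c c' b' a'.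
Proof.
apply/matrixP => i j; rewrite /op12 /blk /id2 /blk12 !mxE.
by move: i j; case_ord8; case_ord8; rewrite ?mxE /=; ring.
Qed.

Lemma op23_blk a b c c' b' a' : op23 (blk a b c c' b' a') = blk23 a b c c' b' a'.
Proof.
apply/matrixP => i j; rewrite /op23 /blk /id2 /blk23 !mxE.
by move: i j; case_ord8; case_ord8; rewrite ?mxE /=; ring.
Qed.

Lemma op13_blk a b c c' b' a' : op13 (blk a b c c' b' a') = blk13 a b c c' b' a'.
Proof.
rewrite /op13 op12_blk /P23 -/(op23 _) /swap op23_blk.
apply/matrixP => i j; rewrite mulmx3E.
under eq_bigr do under eq_bigr do rewrite !mxE.
rewrite !big_ord8 mxE.
by move: i j; case_ord8; case_ord8;
  cbn -[GRing.mul GRing.add GRing.zero GRing.one]; ring.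
Qed.

End SixVertexBlocks.

Ltac ybe_entrywise :=
  let i := fresh "i" in let j := fresh "j" in
  apply/matrixP; intros i j; rewrite !mulmx3E;
  under eq_bigr do under eq_bigr do rewrite !mxE;
  under [RHS]eq_bigr do under eq_bigr do rewrite !mxE;
  rewrite !big_ord8; move: i j; case_ord8; case_ord8;
  cbn -[GRing.mul GRing.add GRing.zero GRing.one GRing.opp GRing.inv ominus oplus];
  rewrite /ominus /oplus; field.

Lemma ybe_Rmx_Lop (F : fieldType) (b xi xi' tj : F) :
  1 + b * xi != 0 -> 1 + b * tj != 0 ->
  op12 (Rmx b xi xi') *m op13 (Lop b xi tj) *m op23 (Lop b xi' tj)
  = op23 (Lop b xi' tj) *m op13 (Lop b xi tj) *m op12 (Rmx b xi xi').
Proof.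
move=> hxi htj; rewrite !Lop_blk op12_blk op13_blk op23_blk.
by ybe_entrywise; rewrite ?hxi ?htj.
Qed.

Lemma ybe_Rmx'_Lop' (F : fieldType) (b xi xi' tj : F) :
  1 + b * xi' != 0 ->
  op12 (Rmx' b xi xi') *m op13 (Lop' b xi tj) *m op23 (Lop' b xi' tj)
  = op23 (Lop' b xi' tj) *m op13 (Lop' b xi tj) *m op12 (Rmx' b xi xi').
Proof.
move=> hxi'; rewrite !Lop'_blk op12_blk op13_blk op23_blk.
by ybe_entrywise; rewrite ?hxi'.
Qed.

Lemma ybe_rmx_Lop (F : fieldType) (b xi tj tj' : F) :
  1 + b * tj != 0 -> 1 + b * tj' != 0 ->
  op23 (rmx b tj tj') *m op12 (Lop b xi tj) *m op13 (Lop b xi tj')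
  = op13 (Lop b xi tj') *m op12 (Lop b xi tj) *m op23 (rmx b tj tj').
Proof.
move=> htj htj'; rewrite !Lop_blk op12_blk op13_blk op23_blk.
by ybe_entrywise; rewrite ?htj ?htj'.
Qed.

Lemma ybe_rmx_Lop' (F : fieldType) (b xi tj tj' : F) :
  1 + b * tj' != 0 ->
  op23 (rmx b tj tj') *m op12 (Lop' b xi tj) *m op13 (Lop' b xi tj')
  = op13 (Lop' b xi tj') *m op12 (Lop' b xi tj) *m op23 (rmx b tj tj').
Proof.
move=> htj'; rewrite !Lop'_blk op12_blk op13_blk op23_blk.
by ybe_entrywise; rewrite ?htj'.
Qed.

Theorem mainTheorem3 (F : fieldType) (b xi xi' tj tj' : F)
  (hxi : 1 + b * xi != 0) (hxi' : 1 + b * xi' != 0)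
  (htj : 1 + b * tj != 0) (htj' : 1 + b * tj' != 0) :
  [/\ op12 (Rmx b xi xi') *m op13 (Lop b xi tj) *m op23 (Lop b xi' tj)
        = op23 (Lop b xi' tj) *m op13 (Lop b xi tj) *m op12 (Rmx b xi xi'),
      op12 (Rmx' b xi xi') *m op13 (Lop' b xi tj) *m op23 (Lop' b xi' tj)
        = op23 (Lop' b xi' tj) *m op13 (Lop' b xi tj) *m op12 (Rmx' b xi xi'),
      op23 (rmx b tj tj') *m op12 (Lop b xi tj) *m op13 (Lop b xi tj')
        = op13 (Lop b xi tj') *m op12 (Lop b xi tj) *m op23 (rmx b tj tj')
    & op23 (rmx b tj tj') *m op12 (Lop' b xi tj) *m op13 (Lop' b xi tj')
        = op13 (Lop' b xi tj') *m op12 (Lop' b xi tj) *m op23 (rmx b tj tj')].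
Proof.
split; [exact: ybe_Rmx_Lop | exact: ybe_Rmx'_Lop'
       | exact: ybe_rmx_Lop | exact: ybe_rmx_Lop'].
Qed.
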